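(* In the setting of the context, for all $u$ with $u_\infty<u\le u_0$, \[ \beta N-\beta\tilde S e^{(\beta/\gamma)\tilde R}u+\gamma\log u>\psi(u)>0 \] and \[ \beta N-\beta\tilde S e^{(\beta/\gamma)\tilde R}u+\gamma\log u>\beta\Bigl(\tilde E e^{-\delta\varphi(u)}+\tilde S e^{(\beta/\gamma)\tilde R}e^{-\delta\varphi(u)}\int_u^{u_0}e^{\delta\varphi(v)}dv\Bigr)>0 . \]
   Context: Let $\beta,\gamma,\delta>0$ be constants and $\tilde S,\tilde E,\tilde I,\tilde R$ real numbers with $N:=\tilde S+\tilde E+\tilde I+\tilde R>0$. Standing assumptions: (A1) $\tilde I>0$; (A2) $\tilde E>(\gamma/\delta)\tilde I$; (A3) $\tilde S>\delta\tilde E/(\beta\tilde I)$; (A4) $\tilde R\ge 0$ and $N>\tilde S e^{(\beta/\gamma)\tilde R}+\tilde R$. Let $\alpha$ be the unique solution in $(\tilde R,N)$ of $x=N-\tilde S e^{(\beta/\gamma)\tilde R}e^{-(\beta/\gamma)x}$, and assume (A5) $\tilde S<(\gamma/\beta)e^{(\beta/\gamma)(\alpha-\tilde R)}$. Put $u_0:=e^{-(\beta/\gamma)\tilde R}$, $u_\infty:=e^{-(\beta/\gamma)\alpha}$. Let $\psi$ be the unique function, continuous and positive on $(u_\infty,u_0]$ and $C^1$ on $(u_\infty,u_0)$, satisfying $\psi'(u)\psi(u)-\frac{\gamma+\delta}{u}\psi(u)=-\delta\,\frac{\beta N-\beta\tilde S e^{(\beta/\gamma)\tilde R}u+\gamma\log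 u}{u}$ on $(u_\infty,u_0)$ and $\psi(u_0)=\beta\tilde I$. Let $\varphi(u):=\int_u^{u_0}\frac{d\xi}{\xi\psi(\xi)}$ for $u\in(u_\infty,u_0]$. *)

From Stdlib Require Import Reals.
From Coquelicot Require Import Coquelicot.
Open Scope R_scope.

Definition continuous_on_Ioc (f : R -> R) (a b : R) : Prop :=
  forall u, a < u <= b ->
    filterlim f (within (fun x => a < x <= b) (locally u)) (locally (f u)).

Definition C1_on_Ioo (f : R -> R) (a b : R) : Prop :=
  (forall u, a < u < b -> ex_derive f u) /\
  (forall u, a < u < b -> continuous (Derive f) u).

Definition Fsir (beta gamma N S Rt u : R) : R :=
  beta * N - beta * S * exp ((beta / gamma) * Rt) * u + gamma * ln u.

Definition phi_of (psi : R -> R) (u0 u : R) : R :=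
  RInt (fun xi => / (xi * psi xi)) u u0.

(* Along the solution, the quantity
     W(u) = (F(u) - psi(u)) e^{delta phi(u)} - c int_u^{u0} e^{delta phi(v)} dv,
   with F = Fsir and c = beta S e^{(beta/gamma) R}, has zero derivative: the
   Riccati-type equation for psi is exactly what makes the integrating factor
   e^{delta phi} work.  Evaluating at u0, where F - psi = beta E, expresses
   F - psi as beta (E e^{-delta phi} + S e^{(beta/gamma) R} e^{-delta phi}
   int_u^{u0} e^{delta phi}), which is positive since E and S are. *)
From Stdlib Require Import Reals Lra.
From Coquelicot Require Import Coquelicot.
Open Scope R_scope.

Lemma continuous_on_Ioc_Rmin (f : R -> R) (a b x : R) :
  continuous_on_Ioc f a b -> a < x -> continuous (fun y => f (Rmin y b)) x.
Proof.
  intros Hf Hx.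
  destruct (Rle_or_lt x b) as [Hxb | Hbx].
  - unfold continuous. rewrite (Rmin_left _ _ Hxb).
    eapply filterlim_comp; [| apply Hf; lra].
    intros P [eps HP].
    assert (Hd : 0 < Rmin eps (x - a)) by (apply Rmin_glb_lt; [apply cond_pos | lra]).
    exists (mkposreal _ Hd). intros y Hy.
    change (Rabs (y - x) < Rmin eps (x - a)) in Hy.
    pose proof (Rmin_l eps (x - a)). pose proof (Rmin_r eps (x - a)).
    apply Rabs_lt_between' in Hy.
    apply HP.
    + change (Rabs (Rmin y b - x) < eps).
      apply Rabs_lt_between'. unfold Rmin; destruct (Rle_dec y b); lra.
    + unfold Rmin; destruct (Rle_dec y b); lra.
  - apply continuous_ext_loc with (fun _ => f b); [| apply continuous_const].
    assert (Hd : 0 < x - b) by lra.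
    exists (mkposreal _ Hd). intros y Hy.
    change (Rabs (y - x) < x - b) in Hy.
    apply Rabs_lt_between' in Hy.
    rewrite Rmin_right; lra.
Qed.

Lemma is_derive_Rmin (f : R -> R) (b x l : R) :
  x < b -> is_derive f x l -> is_derive (fun y => f (Rmin y b)) x l.
Proof.
  intros Hxb Hf. apply is_derive_ext_loc with f; [| exact Hf].
  assert (Hd : 0 < b - x) by lra.
  exists (mkposreal _ Hd). intros y Hy.
  change (Rabs (y - x) < b - x) in Hy. apply Rabs_lt_between' in Hy.
  rewrite Rmin_left; [reflexivity | lra].
Qed.

Lemma phi_of_Rmin (psi : R -> R) (u0 u : R) :
  u <= u0 -> phi_of (fun y => psi (Rmin y u0)) u0 u = phi_of psi u0 u.
Proof.
  intros Hu. apply RInt_ext. intros y Hy.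
  rewrite Rmin_left, Rmax_right in Hy by lra.
  rewrite Rmin_left by lra. reflexivity.
Qed.

Lemma is_derive_RInt_lower (f : R -> R) (a b x : R) :
  a < b -> (forall y, a < y -> continuous f y) -> a < x ->
  is_derive (fun y => RInt f y b) x (- f x).
Proof.
  intros Hab Hf Hx.
  apply (is_derive_RInt' (V := R_NormedModule) f (fun y => RInt f y b) x b);
    [| apply Hf; lra].
  assert (Hd : 0 < x - a) by lra.
  exists (mkposreal _ Hd). intros y Hy.
  change (Rabs (y - x) < x - a) in Hy.
  apply Rabs_lt_between' in Hy.
  apply (RInt_correct (V := R_CompleteNormedModule)), ex_RInt_continuous.
  intros z Hz. apply Hf.
  assert (Rmin y b > a) by (unfold Rmin; destruct (Rle_dec y b); lra). lra.
Qed.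

Lemma is_derive_0_eq (f : R -> R) (u v : R) :
  u <= v ->
  (forall x, u < x < v -> is_derive f x 0) ->
  (forall x, u <= x <= v -> continuous f x) ->
  f u = f v.
Proof.
  intros Huv Hd Hc.
  destruct (Req_dec u v) as [-> | Hne]; [reflexivity |].
  destruct (MVT_gen f u v (fun _ => 0)) as [w [_ Hw]].
  - rewrite Rmin_left, Rmax_right by lra. exact Hd.
  - rewrite Rmin_left, Rmax_right by lra.
    intros x Hx. apply continuity_pt_filterlim, Hc. exact Hx.
  - lra.
Qed.

Section IntegratingFactor.

Variables (gamma delta c a u0 : R) (psi psi' F : R -> R).

Hypothesis Ha : 0 <= a.
Hypothesis Hau : a < u0.
Hypothesis Hpsi_cont : forall x, a < x -> continuous psi x.
Hypothesis Hpsi_pos : forall x, a < x -> 0 < psi x.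
Hypothesis Hpsi_der : forall x, a < x < u0 -> is_derive psi x (psi' x).
Hypothesis Hpsi_ode : forall x, a < x < u0 ->
  psi' x * psi x - (gamma + delta) / x * psi x = - delta * (F x / x).
Hypothesis HF : forall x, a < x -> is_derive F x (- c + gamma / x).

Let g (v : R) : R := exp (delta * phi_of psi u0 v).

Let G (u : R) : R := RInt g u u0.

Lemma is_derive_phi_of x : a < x -> is_derive (phi_of psi u0) x (- / (x * psi x)).
Proof.
  intros Hx. apply (is_derive_RInt_lower (fun xi => / (xi * psi xi)) a); auto.
  intros y Hy. apply continuous_Rinv_comp.
  - apply (continuous_mult (fun y => y) psi); [apply continuous_id | auto].
  - pose proof (Hpsi_pos y Hy). apply Rgt_not_eq, Rmult_lt_0_compat; lra.
Qed.

Let is_derive_g x : a < x -> is_derive g x (delta * (- / (x * psi x)) * g x).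
Proof.
  intros Hx.
  apply (is_derive_comp exp (fun y => delta * phi_of psi u0 y)).
  - apply is_derive_exp.
  - apply is_derive_scal, is_derive_phi_of, Hx.
Qed.

Let continuous_g x : a < x -> continuous g x.
Proof.
  intros Hx. apply (ex_derive_continuous (K := R_AbsRing) (V := R_NormedModule)).
  eexists. apply is_derive_g, Hx.
Qed.

Let W (u : R) : R := (F u - psi u) * g u - c * G u.

Let is_derive_W x : a < x < u0 -> is_derive W x 0.
Proof.
  intros Hx.
  assert (HW : is_derive W x
    ((- c + gamma / x - psi' x) * g x
     + (F x - psi x) * (delta * (- / (x * psi x)) * g x) - c * (- g x))).
  { apply (is_derive_minus (fun y => (F y - psi y) * g y) (fun y => c * G y)).
    - apply (is_derive_mult (fun y => F y - psi y) g).
      + apply (is_derive_minus F psi); [apply HF | apply Hpsi_der]; lra.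
      + apply is_derive_g; lra.
      + intros; apply Rmult_comm.
    - apply is_derive_scal, (is_derive_RInt_lower g a); auto using continuous_g; lra. }
  replace 0 with ((- c + gamma / x - psi' x) * g x
     + (F x - psi x) * (delta * (- / (x * psi x)) * g x) - c * (- g x)); [exact HW |].
  pose proof (Hpsi_ode x Hx) as Hode.
  assert (Hpos : 0 < psi x) by (apply Hpsi_pos; lra).
  assert (Hpsi' : psi' x = ((gamma + delta) / x * psi x - delta * (F x / x)) / psi x).
  { apply (Rmult_eq_reg_r (psi x)); [| lra].
    rewrite Rdiv_def, (Rmult_assoc _ (/ psi x)), Rinv_l, Rmult_1_r by lra. lra. }
  rewrite Hpsi'. field. lra.
Qed.

Let continuous_W x : a < x -> continuous W x.
Proof.
  intros Hx.
  apply (continuous_minus (fun y => (F y - psi y) * g y) (fun y => c * G y)).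
  - apply (continuous_mult (fun y => F y - psi y) g); [| apply continuous_g, Hx].
    apply (continuous_minus F psi); [| apply Hpsi_cont, Hx].
    apply (ex_derive_continuous (K := R_AbsRing) (V := R_NormedModule)).
    eexists. apply HF, Hx.
  - apply (continuous_scal_r c G), (ex_derive_continuous (K := R_AbsRing) (V := R_NormedModule)).
    eexists. apply (is_derive_RInt_lower g a); auto using continuous_g.
Qed.

Lemma F_sub_psi_integrating_factor_Ioi u : a < u <= u0 ->
  F u - psi u = (F u0 - psi u0) * exp (- delta * phi_of psi u0 u)
                + c * exp (- delta * phi_of psi u0 u) * G u.
Proof.
  intros Hu.
  assert (HWu : W u = W u0).
  { apply is_derive_0_eq; [lra | | intros; apply continuous_W; lra].
    intros x Hx. apply is_derive_W. lra. }
  assert (HWu0 : W u0 = F u0 - psi u0).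
  { unfold W, G, g, phi_of. rewrite !RInt_point. unfold zero; simpl.
    rewrite Rmult_0_r, exp_0. ring. }
  assert (Hinv : exp (- delta * phi_of psi u0 u) * g u = 1).
  { unfold g. rewrite <- exp_plus, <- exp_0. f_equal. ring. }
  rewrite HWu0 in HWu. unfold W in HWu.
  rewrite <- (Rmult_1_r (F u - psi u)), <- Hinv.
  replace (F u0 - psi u0) with ((F u - psi u) * g u - c * G u) by exact HWu.
  ring.
Qed.

Lemma RInt_exp_phi_of_ge_0_Ioi u : a < u <= u0 -> 0 <= G u.
Proof.
  intros Hu. apply RInt_ge_0; [lra | | intros; left; apply exp_pos].
  apply (ex_RInt_continuous (V := R_CompleteNormedModule)).
  rewrite Rmin_left by lra. intros z Hz. apply continuous_g. lra.
Qed.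

End IntegratingFactor.

Section ClampedSolution.

Variables (gamma delta c a u0 : R) (psi F : R -> R).

Hypothesis Ha : 0 <= a.
Hypothesis Hau : a < u0.
Hypothesis Hpsi_cont : continuous_on_Ioc psi a u0.
Hypothesis Hpsi_pos : forall x, a < x <= u0 -> 0 < psi x.
Hypothesis Hpsi_der : forall x, a < x < u0 -> ex_derive psi x.
Hypothesis Hpsi_ode : forall x, a < x < u0 ->
  Derive psi x * psi x - (gamma + delta) / x * psi x = - delta * (F x / x).
Hypothesis HF : forall x, a < x -> is_derive F x (- c + gamma / x).

(* [MVT_gen] needs two-sided continuity at [u0], so [psi] is continued by the
   constant [psi u0] to the right of [u0]. *)
Let ps (y : R) : R := psi (Rmin y u0).

Let ps_eq x : x <= u0 -> ps x = psi x.
Proof. intros Hx. unfold ps. rewrite Rmin_left; auto. Qed.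

Let ps_pos x : a < x -> 0 < ps x.
Proof. intros Hx. apply Hpsi_pos. unfold Rmin; destruct (Rle_dec x u0); lra. Qed.

Let ps_der x : a < x < u0 -> is_derive ps x (Derive psi x).
Proof. intros Hx. apply is_derive_Rmin; [lra |]. apply Derive_correct, Hpsi_der, Hx. Qed.

Let ps_ode x : a < x < u0 ->
  Derive psi x * ps x - (gamma + delta) / x * ps x = - delta * (F x / x).
Proof. intros Hx. rewrite ps_eq by lra. apply Hpsi_ode, Hx. Qed.

Let RInt_exp_phi_of_ps u : a < u <= u0 ->
  RInt (fun v => exp (delta * phi_of ps u0 v)) u u0
  = RInt (fun v => exp (delta * phi_of psi u0 v)) u u0.
Proof.
  intros Hu. apply RInt_ext. intros v Hv. rewrite Rmin_left, Rmax_right in Hv by lra.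
  unfold ps. rewrite phi_of_Rmin by lra. reflexivity.
Qed.

Lemma F_sub_psi_integrating_factor u : a < u <= u0 ->
  F u - psi u = (F u0 - psi u0) * exp (- delta * phi_of psi u0 u)
                + c * exp (- delta * phi_of psi u0 u)
                  * RInt (fun v => exp (delta * phi_of psi u0 v)) u u0.
Proof.
  intros Hu.
  rewrite <- RInt_exp_phi_of_ps, <- (phi_of_Rmin psi u0 u), <- !ps_eq by lra.
  apply (F_sub_psi_integrating_factor_Ioi gamma delta c a u0 ps (Derive psi) F); auto.
  intros x Hx. apply continuous_on_Ioc_Rmin with a; assumption.
Qed.

Lemma RInt_exp_phi_of_ge_0 u : a < u <= u0 ->
  0 <= RInt (fun v => exp (delta * phi_of psi u0 v)) u u0.
Proof.
  intros Hu. rewrite <- RInt_exp_phi_of_ps by exact Hu.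
  apply (RInt_exp_phi_of_ge_0_Ioi delta a u0 ps); auto.
  intros x Hx. apply continuous_on_Ioc_Rmin with a; assumption.
Qed.

End ClampedSolution.

Lemma is_derive_Fsir (beta gamma N S Rt x : R) : 0 < x ->
  is_derive (Fsir beta gamma N S Rt) x (- (beta * (S * exp ((beta / gamma) * Rt))) + gamma / x).
Proof. intros Hx. unfold Fsir. auto_derive; [lra | field; lra]. Qed.

Lemma Fsir_exp (beta gamma N S Rt : R) : gamma <> 0 ->
  Fsir beta gamma N S Rt (exp (- (beta / gamma) * Rt)) = beta * (N - S - Rt).
Proof.
  intros Hgamma. unfold Fsir. rewrite ln_exp, Rmult_assoc, <- exp_plus.
  replace ((beta / gamma) * Rt + - (beta / gamma) * Rt) with 0 by ring.
  rewrite exp_0. field. exact Hgamma.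
Qed.

Theorem proposition1
  (beta gamma delta St Et It Rt alpha : R) (psi : R -> R)
  (Hbeta : 0 < beta) (Hgamma : 0 < gamma) (Hdelta : 0 < delta)
  (HN : 0 < St + Et + It + Rt)
  (A1 : 0 < It)
  (A2 : Et > (gamma / delta) * It)
  (A3 : St > delta * Et / (beta * It))
  (A4a : 0 <= Rt)
  (A4b : St + Et + It + Rt > St * exp ((beta / gamma) * Rt) + Rt)
  (Halpha_int : Rt < alpha < St + Et + It + Rt)
  (Halpha_eq : alpha = (St + Et + It + Rt)
                 - St * exp ((beta / gamma) * Rt) * exp (- (beta / gamma) * alpha))
  (A5 : St < (gamma / beta) * exp ((beta / gamma) * (alpha - Rt)))
  (Hpsi_cont : continuous_on_Ioc psi (exp (- (beta / gamma) * alpha))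
                                      (exp (- (beta / gamma) * Rt)))
  (Hpsi_pos : forall u, exp (- (beta / gamma) * alpha) < u <= exp (- (beta / gamma) * Rt) ->
                0 < psi u)
  (Hpsi_C1 : C1_on_Ioo psi (exp (- (beta / gamma) * alpha)) (exp (- (beta / gamma) * Rt)))
  (Hpsi_ode : forall u, exp (- (beta / gamma) * alpha) < u < exp (- (beta / gamma) * Rt) ->
                Derive psi u * psi u - (gamma + delta) / u * psi u
                = - delta * (Fsir beta gamma (St + Et + It + Rt) St Rt u / u))
  (Hpsi_u0 : psi (exp (- (beta / gamma) * Rt)) = beta * It) :
  forall u, exp (- (beta / gamma) * alpha) < u <= exp (- (beta / gamma) * Rt) ->
    (Fsir beta gamma (St + Et + It + Rt) St Rt u > psi u /\ psi u > 0) /\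
    (Fsir beta gamma (St + Et + It + Rt) St Rt u >
       beta * (Et * exp (- delta * phi_of psi (exp (- (beta / gamma) * Rt)) u)
               + St * exp ((beta / gamma) * Rt)
                 * exp (- delta * phi_of psi (exp (- (beta / gamma) * Rt)) u)
                 * RInt (fun v => exp (delta * phi_of psi (exp (- (beta / gamma) * Rt)) v))
                        u (exp (- (beta / gamma) * Rt)))
     /\ beta * (Et * exp (- delta * phi_of psi (exp (- (beta / gamma) * Rt)) u)
               + St * exp ((beta / gamma) * Rt)
                 * exp (- delta * phi_of psi (exp (- (beta / gamma) * Rt)) u)
                 * RInt (fun v => exp (delta * phi_of psi (exp (- (beta / gamma) * Rt)) v))
                        u (exp (- (beta / gamma) * Rt))) > 0).
Proof.
  intros u Hu.
  assert (Hau : exp (- (beta / gamma) * alpha) < exp (- (beta / gamma) * Rt)).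
  { assert (0 < beta / gamma) by (apply Rdiv_lt_0_compat; lra). apply exp_increasing. nra. }
  assert (Ha : 0 <= exp (- (beta / gamma) * alpha)) by (left; apply exp_pos).
  assert (HE : 0 < Et).
  { assert (0 < gamma / delta * It) by (apply Rmult_lt_0_compat; [apply Rdiv_lt_0_compat |]; lra).
    lra. }
  assert (HK : 0 < St * exp ((beta / gamma) * Rt)).
  { assert (0 < delta * Et / (beta * It)) by (apply Rdiv_lt_0_compat; nra).
    apply Rmult_lt_0_compat; [lra | apply exp_pos]. }
  assert (HF : forall x, exp (- (beta / gamma) * alpha) < x ->
    is_derive (Fsir beta gamma (St + Et + It + Rt) St Rt) x
              (- (beta * (St * exp ((beta / gamma) * Rt))) + gamma / x)).
  { intros x Hx. apply is_derive_Fsir. lra. }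
  pose proof (F_sub_psi_integrating_factor _ _ _ _ _ _ _ Ha Hau Hpsi_cont Hpsi_pos
                (proj1 Hpsi_C1) Hpsi_ode HF u Hu) as Hid.
  pose proof (RInt_exp_phi_of_ge_0 delta _ _ psi Ha Hau Hpsi_cont Hpsi_pos u Hu) as HJ.
  rewrite Fsir_exp, Hpsi_u0 in Hid by lra.
  assert (Hpsi_u : 0 < psi u) by (apply Hpsi_pos, Hu).
  set (e := exp (- delta * _)) in *.
  set (J := RInt _ u _) in *.
  set (K := St * exp ((beta / gamma) * Rt)) in *.
  assert (He : 0 < e) by apply exp_pos.
  assert (Hdiff : Fsir beta gamma (St + Et + It + Rt) St Rt u - psi u = beta * (Et * e + K * e * J))
    by (rewrite Hid; ring).
  assert (Hpos : 0 < beta * (Et * e + K * e * J)).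
  { apply Rmult_lt_0_compat; [exact Hbeta |].
    apply Rplus_lt_le_0_compat; [nra |].
    apply Rmult_le_pos; [nra | exact HJ]. }
  split; split; lra.
Qed.
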